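(* Let $A$ be a basic connected finite dimensional algebra over an algebraically closed field $k$ with ordinary quiver $Q$ without oriented cycles, and assume $A$ is constricted, i.e. $\dim_k e_yAe_x=1$ for every arrow $x\to y$ of $Q$. Let $\nu\colon kQ\twoheadrightarrow A$ be any presentation and $I=\mathsf{Ker}(\nu)$. Then $\theta_\nu\colon\mathsf{Hom}(\pi_1(Q,I),k^+)\to\mathsf{HH}^1(A)$ is an isomorphism. In particular $\mathsf{HH}^1(A)$ is an abelian Lie algebra.
   Context: Fix a complete set $e_1,\dots,e_n$ of primitive orthogonal idempotents of $A$ indexed by $Q_0=\{1,\dots,n\}$, $E=\bigoplus ke_i$. A presentation is a surjective algebra map $\nu\colon kQ\twoheadrightarrow A$ with admissible kernel ($(kQ^+)^N\subseteq\mathsf{Ker}\,\nu\subseteq(kQ^+)^2$ for some $N\ge2$, $kQ^+$ the arrow ideal) and $\nu(e_i)=e_i$. $\mathsf{HH}^1(A)=Der_0(A)/Int_0(A)$, with $Der_0(A)$ the derivations vanishing on all $e_i$ (commutator bracket) and $Int_0(A)=\{a\mapsto ea-ae\mid e\in E\}$. Walks: paths in $Q$ with formal inverse arrows allowed. $\sim_I$ is the smallest equivalence relation on walks with $\alpha\alpha^{-1}\sim_I e_y$, $\alpha^{-1}\alpha\sim_I e_x$ for arrows $\alpha\colon x\to y$, compatible with concatenation, and identifying two paths occurring with nonzero coefficient in a same minimal relation of $I$ (a nonzero $\sum t_iu_i\in I$, $t_i\neq0$, distinct paths, no nonempty proper subsum in $I$). $\pi_1(Q,I)$ is the group of classes of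 closed walks at a fixed vertex $x_0$. Fix a maximal tree $T$ of $Q$, $\gamma_x$ the minimal walk in $T$ from $x_0$ to $x$. For a group homomorphism $f\colon\pi_1(Q,I)\to k^+$, $\theta_\nu(f)$ is the class of the derivation $\tilde f$ with $\tilde f(\nu(u))=f([\gamma_y^{-1}u\gamma_x]_I)\nu(u)$ for paths $u$ from $x$ to $y$. *)

From HB Require Import structures.
From mathcomp Require Import all_boot all_order all_algebra all_field.
From Stdlib Require Import Relation_Operators.
Set Implicit Arguments. Unset Strict Implicit. Unset Printing Implicit Defensive.
Import GRing.Theory.
Local Open Scope ring_scope.

(* A step of a walk is (alpha, true) (traverse alpha forwards) or             *)
(* (alpha, false) (traverse the formal inverse alpha^-1).                     *)
(* Walks are written in TRAVERSAL order (first step first); thus the walk     *)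
(* written  gamma_y^-1 u gamma_x  in the paper (composition from right to     *)
(* left) is  gamma_x ++ u ++ rev(gamma_y)  here.                              *)
Section Quiver.
Variables (n : nat) (Ar : finType) (src tgt : Ar -> 'I_n).

Definition step_start (st : Ar * bool) : 'I_n :=
  if st.2 then src st.1 else tgt st.1.
Definition step_end (st : Ar * bool) : 'I_n :=
  if st.2 then tgt st.1 else src st.1.

Fixpoint wvalid (x : 'I_n) (w : seq (Ar * bool)) : bool :=
  if w is st :: w' then (step_start st == x) && wvalid (step_end st) w'
  else true.
Fixpoint wend (x : 'I_n) (w : seq (Ar * bool)) : 'I_n :=
  if w is st :: w' then wend (step_end st) w' else x.

Definition is_walk (x y : 'I_n) (w : seq (Ar * bool)) : bool :=
  wvalid x w && (wend x w == y).

Definition winv (w : seq (Ar * bool)) : seq (Ar * bool) :=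
  rev (map (fun st => (st.1, ~~ st.2)) w).

Definition fw (u : seq Ar) : seq (Ar * bool) := map (fun a => (a, true)) u.

(* u is a path from x to y (the empty path at x is the trivial path e_x) *)
Definition is_path (x y : 'I_n) (u : seq Ar) : bool := is_walk x y (fw u).

Definition acyclic : Prop :=
  forall (x : 'I_n) (u : seq Ar), is_path x x u -> u = [::].

Fixpoint reduced (w : seq (Ar * bool)) : bool :=
  match w with
  | st :: ((st' :: _) as w') =>
      ~~ ((st.1 == st'.1) && (st.2 != st'.2)) && reduced w'
  | _ => true
  end.

Definition in_tree (T : {set Ar}) (w : seq (Ar * bool)) : bool :=
  all (fun st => st.1 \in T) w.

Definition maximal_tree (x0 : 'I_n) (T : {set Ar}) : Prop :=
  (forall x, exists w, is_walk x0 x w && in_tree T w) /\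
  (forall x w, is_walk x x w -> in_tree T w -> reduced w -> w = [::]).

Definition tree_walks (x0 : 'I_n) (T : {set Ar}) (gam : 'I_n -> seq (Ar * bool))
  : Prop :=
  forall x, [/\ is_walk x0 x (gam x), in_tree T (gam x) &
     forall w, is_walk x0 x w -> in_tree T w -> (size (gam x) <= size w)%N].

End Quiver.

Section Algebra.
Variables (k : fieldType) (A : falgType k).
Variables (n : nat) (Ar : finType) (src tgt : Ar -> 'I_n).
Variables (e : 'I_n -> A).

Definition primitive_idem (a : A) : Prop :=
  a * a = a /\ a != 0 /\
  forall b c : A, b * b = b -> c * c = c -> b * c = 0 -> c * b = 0 ->
    b + c = a -> b = 0 \/ c = 0.

Definition complete_prim_orth_idem : Prop :=
  [/\ forall i, primitive_idem (e i),
      forall i j, i != j -> e i * e j = 0 &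
      \sum_(i < n) e i = 1].

(* A is basic: the projectives e_i A are pairwise non-isomorphic *)
Definition basic_wrt : Prop :=
  forall i j, i != j -> ~ exists a b : A,
    [/\ e i * a * e j = a, e j * b * e i = b, a * b = e i & b * a = e j].

Definition connected_alg : Prop :=
  (1 : A) != 0 /\
  forall c : A, c * c = c -> (forall a : A, c * a = a * c) -> c = 0 \/ c = 1.

Definition constricted : Prop :=
  forall alpha : Ar,
    \dim (<[e (tgt alpha)]> * fullv * <[e (src alpha)]>)%VS = 1%N.

(* An algebra map nu : kQ -> A with nu(e_i) = e_i is the same as a choice of  *)
(* nu(alpha) in e_y A e_x for each arrow alpha : x -> y (universal property   *)
(* of kQ); nu of the path u = alpha_m ... alpha_1 (traversal order            *)
(* alpha_1, ..., alpha_m) from x is nu(alpha_m) ... nu(alpha_1) e_x.          *)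
Variable nuA : Ar -> A.

Definition nu_path (x : 'I_n) (u : seq Ar) : A :=
  foldl (fun acc a => nuA a * acc) (e x) u.

(* An element of kQ: a finite linear combination sum_i t_i u_i of pairwise   *)
(* distinct paths u_i = (source, arrows).                                    *)
Definition kQ_elt (lc : seq (k * ('I_n * seq Ar))) : Prop :=
  all (fun p => wvalid src tgt p.2.1 (fw p.2.2)) lc && uniq (map snd lc).

Definition nu_lc (lc : seq (k * ('I_n * seq Ar))) : A :=
  \sum_(p <- lc) p.1 *: nu_path p.2.1 p.2.2.

Definition presentation : Prop :=
  [/\ forall alpha, e (tgt alpha) * nuA alpha * e (src alpha) = nuA alpha,
      forall a : A, exists lc, kQ_elt lc /\ a = nu_lc lc,
      (* (kQ^+)^N is contained in I for some N >= 2 *)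
      exists N, (2 <= N)%N /\ forall x u, wvalid src tgt x (fw u) ->
                  (N <= size u)%N -> nu_path x u = 0 &
      (* I is contained in (kQ^+)^2 *)
      forall lc, kQ_elt lc -> nu_lc lc = 0 ->
        forall p, p \in lc -> (size p.2.2 <= 1)%N -> p.1 = 0].

Definition minimal_relation (lc : seq (k * ('I_n * seq Ar))) : Prop :=
  [/\ kQ_elt lc, lc != [::], all (fun p => p.1 != 0) lc, nu_lc lc = 0 &
      forall m : bitseq, size m = size lc -> (0 < count id m < size lc)%N ->
        nu_lc (mask m lc) != 0].

Definition simI_gen (z : 'I_n) (g g' : seq (Ar * bool)) : Prop :=
  (exists alpha, g = [:: (alpha, false); (alpha, true)] /\ g' = [::]) \/
  (exists alpha, g = [:: (alpha, true); (alpha, false)] /\ g' = [::]) \/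
  (exists lc u v, [/\ minimal_relation lc, (z, u) \in map snd lc,
                      (z, v) \in map snd lc, g = fw u & g' = fw v]).

Definition simI_step (w w' : 'I_n * seq (Ar * bool)) : Prop :=
  exists p g g' q, [/\ w.1 = w'.1, w.2 = p ++ g ++ q, w'.2 = p ++ g' ++ q,
     wvalid src tgt w.1 w.2 && wvalid src tgt w'.1 w'.2 &
     simI_gen (wend src tgt w.1 p) g g'].

Definition simI := clos_refl_sym_trans _ simI_step.

(* a group homomorphism pi_1(Q,I) -> k^+ is given by a function f on closed   *)
(* walks at x0 (steps) that is constant on ~_I-classes and additive for       *)
(* concatenation; two such are equal iff they agree on closed walks at x0.    *)
Variable x0 : 'I_n.
Definition closed_walk (w : seq (Ar * bool)) : bool := is_walk src tgt x0 x0 w.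

Definition hom_pi1 (f : seq (Ar * bool) -> k) : Prop :=
  (forall w w', closed_walk w -> closed_walk w' -> simI (x0, w) (x0, w') ->
     f w = f w') /\
  (forall w1 w2, closed_walk w1 -> closed_walk w2 -> f (w1 ++ w2) = f w1 + f w2).

Definition der0 (D : A -> A) : Prop :=
  [/\ forall (c : k) (a b : A), D (c *: a + b) = c *: D a + D b,
      forall a b : A, D (a * b) = D a * b + a * D b &
      forall i, D (e i) = 0].

Definition int0 (D : A -> A) : Prop :=
  exists c : 'I_n -> k, forall a : A,
    D a = (\sum_(i < n) c i *: e i) * a - a * (\sum_(i < n) c i *: e i).

(* D is a representative (in Der_0(A)) of theta_nu(f) in HH^1(A):            *)
(* D(nu(u)) = f([gamma_y^-1 u gamma_x]) nu(u) for every path u : x -> y.     *)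
Variable gam : 'I_n -> seq (Ar * bool).
Definition theta_rep (f : seq (Ar * bool) -> k) (D : A -> A) : Prop :=
  der0 D /\ forall x y u, is_path src tgt x y u ->
    D (nu_path x u) = f (gam x ++ fw u ++ winv (gam y)) *: nu_path x u.

End Algebra.

(* Since A is constricted, e_y A e_x is the line spanned by the image of an arrow
   x -> y, so a derivation D in Der_0(A) multiplies each arrow by a scalar and each
   path by the sum of these scalars along it; extended to walks, this weight is
   invariant under ~_I, because the terms of a minimal relation are eigenvectors of D
   with vanishing sum and minimality forces them to share their eigenvalue.
   Conversely, a weight on paths that is additive and constant on minimal relations
   defines a derivation, since every relation is a sum of minimal ones: this is
   theta_nu. Correcting D by the inner derivation built from the weights of the tree
   walks gamma_x shows that theta_nu is onto. An inner derivation ad(sum c_i e_i)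
   multiplies a path from x to y by c_y - c_x, so theta_nu(f) inner forces f to vanish
   on closed walks at x0 (gamma_x0 is empty). Finally, any two derivations are
   simultaneously diagonal on the paths, which span A, so they commute. *)

From HB Require Import structures.
From mathcomp Require Import all_boot all_order all_algebra all_field.
From mathcomp Require Import zify.
From Stdlib Require Import Relation_Operators.
Set Implicit Arguments. Unset Strict Implicit. Unset Printing Implicit Defensive.
Import GRing.Theory.
Local Open Scope ring_scope.

Section Walks.
Variables (n : nat) (Ar : finType) (src tgt : Ar -> 'I_n).
Local Notation wvalid := (wvalid src tgt).
Local Notation wend := (wend src tgt).
Local Notation is_walk := (is_walk src tgt).
Implicit Types (x y z : 'I_n) (w p q : seq (Ar * bool)).

Lemma wvalid_cat x p q : wvalid x (p ++ q) = wvalid x p && wvalid (wend x p) q.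
Proof. by elim: p x => [|st p IHp] x //=; rewrite IHp andbA. Qed.

Lemma wend_cat x p q : wend x (p ++ q) = wend (wend x p) q.
Proof. by elim: p x => [|st p IHp] x //=. Qed.

Lemma fw_cat (u v : seq Ar) : fw (u ++ v) = fw u ++ fw v.
Proof. exact: map_cat. Qed.

Lemma is_walk_wend x w : wvalid x w -> is_walk x (wend x w) w.
Proof. by rewrite /is_walk eqxx andbT. Qed.

Lemma is_walk_cat x y z p q : is_walk x y p -> is_walk y z q -> is_walk x z (p ++ q).
Proof.
by case/andP=> Vp /eqP Ep /andP[Vq Eq]; rewrite /is_walk wvalid_cat wend_cat Ep Vp Vq.
Qed.

Lemma winv_cat p q : winv (p ++ q) = winv q ++ winv p.
Proof. by rewrite /winv map_cat rev_cat. Qed.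

Lemma winvK : involutive (@winv Ar).
Proof.
by move=> w; rewrite /winv map_rev revK -map_comp map_id_in // => -[a b] _ /=; rewrite negbK.
Qed.

Lemma is_walk_winv x y w : is_walk x y w -> is_walk y x (winv w).
Proof.
elim: w x => [|st w IHw] x; first by rewrite /is_walk /= eq_sym.
rewrite /is_walk /= -andbA => /andP[/eqP <- Vw]; rewrite -cat1s winv_cat.
by apply: is_walk_cat (IHw _ Vw) _; case: st {Vw} => a [] /=; rewrite /is_walk /= !eqxx.
Qed.

Lemma is_walk_cancel x y p w q :
  is_walk x y (p ++ w ++ winv w ++ q) -> is_walk x y (p ++ q).
Proof.
rewrite /is_walk !wvalid_cat !wend_cat => /andP[/and4P[-> Vw _ Vq] Ey].
have /andP[_ /eqP back] := is_walk_winv (is_walk_wend Vw).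
by rewrite back in Vq Ey; rewrite Vq.
Qed.

Lemma tree_walks_root x0 T gam : tree_walks src tgt x0 T gam -> gam x0 = [::].
Proof.
by case/(_ x0) => _ _ /(_ [::]); rewrite /is_walk /= eqxx leqn0 => /(_ isT isT) /nilP.
Qed.

End Walks.

Section WalkHomotopy.
Variables (k : fieldType) (A : falgType k) (n : nat) (Ar : finType).
Variables (src tgt : Ar -> 'I_n) (e : 'I_n -> A) (nuA : Ar -> A).

Lemma simI_cancel x p w q : wvalid src tgt x (p ++ w ++ winv w ++ q) ->
  simI src tgt e nuA (x, p ++ w ++ winv w ++ q) (x, p ++ q).
Proof.
elim: w p q => [|st w IHw] p q V; first exact: rst_refl.
have E : p ++ (st :: w) ++ winv (st :: w) ++ q =
         rcons p st ++ w ++ winv w ++ (winv [:: st] ++ q).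
  by rewrite -cat1s winv_cat -cats1 -!catA.
rewrite E in V *; apply: rst_trans; first exact: (IHw _ _ V).
have /andP[V' _] := is_walk_cancel (is_walk_wend V).
rewrite -cats1 -catA in V' *; apply: rst_step.
exists p, [:: st; (st.1, ~~ st.2)], [::], q; split => //.
  by rewrite /= V'; case/andP: (is_walk_cancel (is_walk_wend V')).
by case: st {V V' E} => a [] /=; [right; left | left]; exists a.
Qed.

End WalkHomotopy.

Lemma sum_mask_negb (V : nmodType) (I : Type) (r : seq I) (m : bitseq) (F : I -> V) :
  size m = size r ->
  \sum_(i <- r) F i = \sum_(i <- mask m r) F i + \sum_(i <- mask (map negb m) r) F i.
Proof.
elim: r m => [|x r IHr] [|b m] //=; first by rewrite !big_nil addr0.
case=> /IHr sumE; rewrite big_cons sumE.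
by case: b => /=; rewrite !big_cons; [exact: addrA | exact: addrCA].
Qed.

Lemma sum_undup_partition (V : nmodType) (I J : eqType) (h : I -> J) (r : seq I)
    (F : I -> V) :
  \sum_(j <- undup (map h r)) \sum_(i <- r | h i == j) F i = \sum_(i <- r) F i.
Proof.
under eq_bigr do rewrite big_mkcond.
rewrite exchange_big /= big_seq [RHS]big_seq; apply: eq_bigr => i ri.
rewrite -big_mkcond -big_filter.
have -> : [seq j <- undup (map h r) | h i == j] = [:: h i].
  rewrite (eq_filter (a2 := pred1 (h i))) => [|j]; last by rewrite /= eq_sym.
  by rewrite filter_pred1_uniq ?undup_uniq // mem_undup map_f.
by rewrite big_seq1.
Qed.

Lemma mul_lincomb (R : pzRingType) (B : algType R) (I J : Type) (r : seq I) (s : seq J)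
    (c : I -> R) (d : J -> R) (X : I -> B) (Y : J -> B) :
  (\sum_(i <- r) c i *: X i) * (\sum_(j <- s) d j *: Y j) =
  \sum_(i <- r) \sum_(j <- s) (c i * d j) *: (X i * Y j).
Proof.
rewrite mulr_suml; apply: eq_bigr => i _; rewrite mulr_sumr; apply: eq_bigr => j _.
by rewrite -scalerAl -scalerAr scalerA.
Qed.

Section Eigenvectors.
Variables (R : fieldType) (V : lmodType R).
Implicit Types (f : {linear V -> V}).

Lemma linear_eigen_sum f I (r : seq I) (v : I -> V) (lam : I -> R) :
  (forall i, f (v i) = lam i *: v i) ->
  f (\sum_(i <- r) v i) = \sum_(i <- r) lam i *: v i.
Proof. by move=> eigen; rewrite linear_sum; apply: eq_bigr => i _; apply: eigen. Qed.

Lemma eigen_sum_component f (I : eqType) (r : seq I) (v : I -> V) (lam : I -> R) mu :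
  (forall i, f (v i) = lam i *: v i) ->
  \sum_(i <- r) v i = 0 -> \sum_(i <- r | lam i == mu) v i = 0.
Proof.
move=> eigen; have : {in r, forall i, v i != 0 -> lam i \in mu :: map lam r}.
  by move=> i ri _; rewrite in_cons map_f ?orbT.
(* Induction on a list of eigenvalues covering the nonzero v i: applying
   f - mu1 removes mu1 from the list and rescales the mu-component. *)
elim: (map lam r) v eigen => [|mu1 s IHs] v eigen spec sum0.
  rewrite -[RHS]sum0 [RHS](bigID (fun i => lam i == mu)) /=.
  rewrite [X in _ + X]big1_seq ?addr0 // => i /andP[ne ri].
  by apply/eqP; apply: contraNT ne => /(spec i ri); rewrite mem_seq1.
have [eq_mu|ne] := eqVneq mu1 mu.
  by apply: IHs => // i ri /(spec i ri); rewrite !in_cons eq_mu orbA orbb.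
pose v' i := (lam i - mu1) *: v i.
have eigen' i : f (v' i) = lam i *: v' i by rewrite linearZ /= eigen !scalerA mulrC.
have spec' : {in r, forall i, v' i != 0 -> lam i \in mu :: s}.
  move=> i ri; rewrite scaler_eq0 negb_or subr_eq0 => /andP[ne1 /(spec i ri)].
  by rewrite !in_cons (negPf ne1).
have sum0' : \sum_(i <- r) v' i = 0.
  rewrite /v'; under eq_bigr do rewrite scalerBl -eigen.
  by rewrite sumrB -linear_sum -scaler_sumr sum0 linear0 scaler0 subr0.
have := IHs v' eigen' spec' sum0'.
rewrite (eq_bigr (fun i => (mu - mu1) *: v i)) => [|i /eqP lam_i]; last by rewrite /v' lam_i.
by rewrite -scaler_sumr => /eqP; rewrite scaler_eq0 subr_eq0 eq_sym (negPf ne) => /eqP.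
Qed.

End Eigenvectors.

Section CommutingDiagonal.
Variables (R : fieldType) (V : lmodType R) (D1 D2 : V -> V).
Hypotheses (D1_linear : linear D1) (D2_linear : linear D2).
#[local] HB.instance Definition _ := GRing.isLinear.Build R V V *:%R D1 D1_linear.
#[local] HB.instance Definition _ := GRing.isLinear.Build R V V *:%R D2 D2_linear.

Lemma eigen_sum_commute I (r : seq I) (v : I -> V) (lam1 lam2 : I -> R) :
  (forall i, D1 (v i) = lam1 i *: v i) -> (forall i, D2 (v i) = lam2 i *: v i) ->
  D1 (D2 (\sum_(i <- r) v i)) = D2 (D1 (\sum_(i <- r) v i)).
Proof.
move=> eigen1 eigen2.
have eigen12 i : D1 (lam2 i *: v i) = lam1 i *: (lam2 i *: v i).
  by rewrite linearZ /= eigen1 !scalerA mulrC.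
have eigen21 i : D2 (lam1 i *: v i) = lam2 i *: (lam1 i *: v i).
  by rewrite linearZ /= eigen2 !scalerA mulrC.
rewrite (linear_eigen_sum r eigen2) (linear_eigen_sum r eigen1).
rewrite (linear_eigen_sum r eigen12) (linear_eigen_sum r eigen21).
by apply: eq_bigr => i _; rewrite !scalerA mulrC.
Qed.

End CommutingDiagonal.

Section Presentation.
Variables (k : fieldType) (A : falgType k) (n : nat) (Ar : finType).
Variables (src tgt : Ar -> 'I_n) (e : 'I_n -> A) (nuA : Ar -> A).
Hypothesis e_idem : forall i, e i * e i = e i.
Hypothesis e_orth : forall i j, i != j -> e i * e j = 0.
Hypothesis nuA_corner : forall a, e (tgt a) * nuA a * e (src a) = nuA a.
Hypothesis nuA_neq0 : forall a, nuA a != 0.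
Hypothesis A_constricted : constricted src tgt e.
Hypothesis nu_surj : forall a : A, exists lc, kQ_elt src tgt lc /\ a = nu_lc e nuA lc.
Local Notation nu := (nu_path e nuA).
Local Notation nu_lc := (nu_lc e nuA).
Local Notation wvalid := (wvalid src tgt).
Local Notation wend := (wend src tgt).
Implicit Types (u v : seq Ar) (x y z : 'I_n) (L : seq (k * ('I_n * seq Ar))).

Definition nu_word u : A := foldl (fun acc a => nuA a * acc) 1 u.

Lemma foldl_nu_word (X : A) u : foldl (fun acc a => nuA a * acc) X u = nu_word u * X.
Proof.
elim: u X => [|a u IHu] X /=; first by rewrite mul1r.
by rewrite /nu_word /= !IHu mulr1 mulrA.
Qed.

Lemma nu_pathE z u : nu z u = nu_word u * e z.
Proof. exact: foldl_nu_word. Qed.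

Lemma nu_word_cons a u : nu_word (a :: u) = nu_word u * nuA a.
Proof. by rewrite /nu_word /= foldl_nu_word mulr1. Qed.

Lemma nu_word_cat u v : nu_word (u ++ v) = nu_word v * nu_word u.
Proof. by rewrite /nu_word foldl_cat foldl_nu_word. Qed.

Lemma nuA_src a : nuA a * e (src a) = nuA a.
Proof. by rewrite -nuA_corner -mulrA e_idem. Qed.

Lemma nuA_tgt a : e (tgt a) * nuA a = nuA a.
Proof. by rewrite -nuA_corner !mulrA e_idem. Qed.

Lemma nu_path_arrow a : nu (src a) [:: a] = nuA a.
Proof. by rewrite nu_pathE nu_word_cons /nu_word /= mul1r nuA_src. Qed.

Lemma nu_path_cons a u : nu (src a) (a :: u) = nu (tgt a) u * nuA a.
Proof. by rewrite !nu_pathE nu_word_cons -!mulrA nuA_src nuA_tgt. Qed.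

Lemma e_wend_nu_path z u : wvalid z (fw u) -> e (wend z (fw u)) * nu z u = nu z u.
Proof.
elim: u z => [|a u IHu] z /=; first by rewrite /nu_path /= e_idem.
by case/andP=> /eqP <- Vu; rewrite nu_path_cons mulrA IHu.
Qed.

Lemma mul_e_nu_path y z u : wvalid z (fw u) ->
  e y * nu z u = if y == wend z (fw u) then nu z u else 0.
Proof.
move=> Vu; have [->|ne] := eqVneq; first exact: e_wend_nu_path.
by rewrite -(e_wend_nu_path Vu) mulrA e_orth // mul0r.
Qed.

Lemma mul_nu_path_e z u x : nu z u * e x = if z == x then nu z u else 0.
Proof.
rewrite nu_pathE -mulrA; have [->|ne] := eqVneq; first by rewrite e_idem.
by rewrite e_orth // mulr0.
Qed.

Lemma mul_nu_path z u z' v : wvalid z (fw u) ->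
  nu z' v * nu z u = if wend z (fw u) == z' then nu z (u ++ v) else 0.
Proof.
move=> Vu; rewrite [nu z' v]nu_pathE -mulrA mul_e_nu_path // eq_sym.
by case: ifP; rewrite ?mulr0 // !nu_pathE nu_word_cat mulrA.
Qed.

Definition ecomb (c : 'I_n -> k) : A := \sum_(i < n) c i *: e i.

Lemma mul_ecomb_e c j : ecomb c * e j = c j *: e j.
Proof.
rewrite mulr_suml (bigD1 j) //= big1 ?addr0 => [|i ne]; rewrite -scalerAl.
  by rewrite e_idem.
by rewrite e_orth ?scaler0.
Qed.

Lemma mul_e_ecomb c j : e j * ecomb c = c j *: e j.
Proof.
rewrite mulr_sumr (bigD1 j) //= big1 ?addr0 => [|i ne]; rewrite -scalerAr.
  by rewrite e_idem.
by rewrite e_orth 1?eq_sym ?scaler0.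
Qed.

Lemma mul_ecomb_nu_path c z u : wvalid z (fw u) ->
  ecomb c * nu z u = c (wend z (fw u)) *: nu z u.
Proof.
by move=> Vu; rewrite -{1}(e_wend_nu_path Vu) mulrA mul_ecomb_e -scalerAl e_wend_nu_path.
Qed.

Lemma mul_nu_path_ecomb c z u : nu z u * ecomb c = c z *: nu z u.
Proof.
have nu_e : nu z u * e z = nu z u by rewrite mul_nu_path_e eqxx.
by rewrite -nu_e -mulrA mul_e_ecomb -scalerAr nu_e.
Qed.

Lemma admissible_nuA_neq0 :
  (forall lc, kQ_elt src tgt lc -> nu_lc lc = 0 ->
     forall p, p \in lc -> (size p.2.2 <= 1)%N -> p.1 = 0) ->
  forall a, nuA a != 0.
Proof.
move=> I_square a; apply/eqP => nuA0.
have := I_square [:: (1, (src a, [:: a]))].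
rewrite /kQ_elt /= eqxx /nu_lc big_seq1 scale1r nu_path_arrow nuA0.
by move=> /(_ isT erefl _ (mem_head _ _) isT) /eqP; rewrite oner_eq0.
Qed.

Lemma inner_nu_path c z u : wvalid z (fw u) ->
  ecomb c * nu z u - nu z u * ecomb c = (c (wend z (fw u)) - c z) *: nu z u.
Proof. by move=> Vu; rewrite mul_ecomb_nu_path // mul_nu_path_ecomb scalerBl. Qed.

Definition nu_wlc w L : A := \sum_(p <- L) (p.1 * w p.2) *: nu p.2.1 p.2.2.

Definition scale_lc (c : k) L := [seq (c * p.1, p.2) | p <- L].

Definition valid_lc L := all (fun p => wvalid p.2.1 (fw p.2.2)) L.

Lemma nu_wlc_const c L : nu_wlc (fun _ => c) L = c *: nu_lc L.
Proof. by rewrite scaler_sumr; apply: eq_bigr => p _; rewrite scalerA mulrC. Qed.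

Lemma nu_lc_wlc L : nu_lc L = nu_wlc (fun _ => 1) L.
Proof. by rewrite nu_wlc_const scale1r. Qed.

Lemma eq_nu_wlc w w' L : {in L, forall p, w p.2 = w' p.2} -> nu_wlc w L = nu_wlc w' L.
Proof. by move=> ww'; rewrite /nu_wlc !big_seq; apply: eq_bigr => p /ww' ->. Qed.

Lemma nu_wlc_cat w L1 L2 : nu_wlc w (L1 ++ L2) = nu_wlc w L1 + nu_wlc w L2.
Proof. exact: big_cat. Qed.

Lemma nu_wlc_scale w c L : nu_wlc w (scale_lc c L) = c *: nu_wlc w L.
Proof. by rewrite /nu_wlc big_map scaler_sumr; apply: eq_bigr => p _; rewrite scalerA mulrA. Qed.

Lemma valid_lc_cat L1 L2 : valid_lc (L1 ++ L2) = valid_lc L1 && valid_lc L2.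
Proof. exact: all_cat. Qed.

Lemma valid_lc_scale c L : valid_lc (scale_lc c L) = valid_lc L.
Proof. exact: all_map. Qed.

Definition merge_lc L :=
  [seq p <- [seq (\sum_(p <- L | p.2 == q) p.1, q) | q <- undup (map snd L)] | p.1 != 0].

Lemma nu_wlc_merge w L : nu_wlc w (merge_lc L) = nu_wlc w L.
Proof.
rewrite /nu_wlc big_filter big_mkcond big_map -[RHS](sum_undup_partition snd).
apply: eq_bigr => q _ /=.
have -> : \sum_(p <- L | p.2 == q) (p.1 * w p.2) *: nu p.2.1 p.2.2 =
          (\sum_(p <- L | p.2 == q) p.1) * w q *: nu q.1 q.2.
  by rewrite mulr_suml scaler_suml; apply: eq_bigr => p /eqP ->.
by case: eqP => // ->; rewrite mul0r scale0r.
Qed.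

Lemma nu_wlc_mask w L m : size m = size L ->
  nu_wlc w L = nu_wlc w (mask m L) + nu_wlc w (mask (map negb m) L).
Proof. exact: sum_mask_negb. Qed.

Lemma merge_lc_kQ_elt L : valid_lc L -> kQ_elt src tgt (merge_lc L).
Proof.
move=> VL; apply/andP; split.
  apply/allP => p; rewrite mem_filter => /andP[_ /mapP[q]].
  by rewrite mem_undup => /mapP[p' p'L ->] ->; apply: (allP VL p' p'L).
apply: subseq_uniq (map_subseq _ (filter_subseq _ _)) _.
by rewrite -map_comp map_id undup_uniq.
Qed.

Lemma merge_lc_neq0 L : all (fun p => p.1 != 0) (merge_lc L).
Proof. exact: filter_all. Qed.

Lemma minimal_relation_filter lc (P : pred (k * ('I_n * seq Ar))) p :
  minimal_relation src tgt e nuA lc -> p \in lc -> P p ->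
  nu_lc (filter P lc) = 0 -> all P lc.
Proof.
case=> _ _ _ _ minimal plc Pp; rewrite filter_mask all_count => sub0.
have cntP : count id (map P lc) = count P lc by rewrite count_map.
have cnt_pos : (0 < count P lc)%N by rewrite -has_count; apply/hasP; exists p.
rewrite eqn_leq count_size leqNgt; apply/negP => cnt_lt.
have := minimal (map P lc); rewrite size_map cntP cnt_pos cnt_lt sub0 eqxx.
by move/(_ erefl isT).
Qed.

Lemma minimal_relation_endpoints lc p q : minimal_relation src tgt e nuA lc ->
  p \in lc -> q \in lc ->
  q.2.1 = p.2.1 /\ wend q.2.1 (fw q.2.2) = wend p.2.1 (fw p.2.2).
Proof.
move=> minL plc qlc; have [/andP[Vlc _] _ _ lc0 _] := minL.
set z := p.2.1; set y := wend z (fw p.2.2).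
pose P (r : k * ('I_n * seq Ar)) := (r.2.1 == z) && (y == wend r.2.1 (fw r.2.2)).
have : all P lc.
  apply: minimal_relation_filter minL plc _ _; first by rewrite /P !eqxx.
  transitivity (e y * nu_lc lc * e z); last by rewrite lc0 mulr0 mul0r.
  rewrite /nu_lc big_filter big_mkcond mulr_sumr mulr_suml !big_seq.
  apply: eq_bigr => r rlc; rewrite -scalerAr -scalerAl mul_e_nu_path ?(allP Vlc) // /P.
  case: (y == _); rewrite ?andbF ?mul0r ?scaler0 // andbT mul_nu_path_e.
  by case: (_ == z); rewrite ?scaler0.
by move/allP/(_ q qlc)/andP => [/eqP -> /eqP ->].
Qed.

Section RelationWeights.
Variable lam : 'I_n * seq Ar -> k.
Hypothesis lam_minrel : forall lc p q, minimal_relation src tgt e nuA lc ->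
  p \in lc -> q \in lc -> lam p.2 = lam q.2.

(* Split off a vanishing proper sub-sum until a minimal relation is reached. *)
Lemma nu_wlc_kQ_eq0 L : kQ_elt src tgt L -> all (fun p => p.1 != 0) L ->
  nu_lc L = 0 -> nu_wlc lam L = 0.
Proof.
have [N] := ubnP (size L); elim: N L => // N IHN L sizeL kQL nzL L0.
have [/existsP[[m sm] /= /andP[/andP[cnt_pos cnt_lt] /eqP mask0]] | nosub] :=
  boolP [exists m : (size L).-tuple bool,
           (0 < count id m < size L)%N && (nu_lc (mask m L) == 0)].
  move/eqP: sm => sm.
  have cntC : (count id (map negb m) = size L - count id m)%N.
    by rewrite -sm -(count_predC id m) addKn count_map.
  have kQmask m' : kQ_elt src tgt (mask m' L).
    by case/andP: kQL => VL UL; rewrite /kQ_elt all_mask // map_mask mask_uniq.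
  have maskC0 : nu_lc (mask (map negb m) L) = 0.
    by move: L0; rewrite nu_lc_wlc (nu_wlc_mask _ sm) -!nu_lc_wlc mask0 add0r.
  rewrite (nu_wlc_mask _ sm) !IHN ?addr0 ?all_mask //.
    by rewrite size_mask ?size_map // cntC; lia.
  by rewrite size_mask //; lia.
have [->|Lnn] := eqVneq L [::]; first by rewrite /nu_wlc big_nil.
have minL : minimal_relation src tgt e nuA L.
  split=> // m sm cnt; apply/eqP => mask0; apply: (negP nosub); apply/existsP.
  by exists (Tuple (introT eqP sm)); rewrite /= cnt mask0 eqxx.
have [p0 p0L] : exists p0, p0 \in L.
  by case: L Lnn {IHN sizeL kQL nzL L0 nosub minL} => // p0 L _; exists p0; rewrite mem_head.
rewrite (@eq_nu_wlc _ (fun _ => lam p0.2)) ?nu_wlc_const ?L0 ?scaler0 //.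
by move=> p pL; apply: lam_minrel minL pL p0L.
Qed.

Lemma nu_wlc_eq0 L : valid_lc L -> nu_lc L = 0 -> nu_wlc lam L = 0.
Proof.
move=> VL; rewrite nu_lc_wlc -!(nu_wlc_merge _ L) -nu_lc_wlc.
by apply: nu_wlc_kQ_eq0; [exact: merge_lc_kQ_elt | exact: merge_lc_neq0].
Qed.

Lemma nu_wlc_eq L1 L2 : valid_lc L1 -> valid_lc L2 ->
  nu_lc L1 = nu_lc L2 -> nu_wlc lam L1 = nu_wlc lam L2.
Proof.
move=> V1 V2 E; apply/eqP; rewrite -subr_eq0 -scaleN1r -nu_wlc_scale -nu_wlc_cat.
apply/eqP/nu_wlc_eq0; first by rewrite valid_lc_cat valid_lc_scale V1.
by rewrite nu_lc_wlc nu_wlc_cat nu_wlc_scale -!nu_lc_wlc E scaleN1r subrr.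
Qed.

End RelationWeights.

Lemma der0_lincomb c D1 D2 :
  der0 e D1 -> der0 e D2 -> der0 e (fun a => c *: D1 a + D2 a).
Proof.
case=> lin1 mul1 e1 [lin2 mul2 e2]; split.
- by move=> s a b; rewrite lin1 lin2 !scalerDr !scalerA mulrC addrACA.
- by move=> a b; rewrite mul1 mul2 scalerDr mulrDl mulrDr -scalerAl -scalerAr addrACA.
by move=> i; rewrite e1 e2 scaler0 addr0.
Qed.

Lemma der0_inner c : der0 e (fun a => ecomb c * a - a * ecomb c).
Proof.
split.
- by move=> s a b; rewrite mulrDr mulrDl -scalerAr -scalerAl opprD addrACA -scalerBr.
- by move=> a b; rewrite mulrBl mulrBr !mulrA addrA subrK.
by move=> i; rewrite mul_ecomb_e mul_e_ecomb subrr.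
Qed.

Lemma theta_rep_lincomb gam c f g D1 D2 :
  theta_rep src tgt e nuA gam f D1 -> theta_rep src tgt e nuA gam g D2 ->
  theta_rep src tgt e nuA gam (fun w => c * f w + g w) (fun a => c *: D1 a + D2 a).
Proof.
case=> der1 theta1 [der2 theta2]; split; first exact: der0_lincomb.
by move=> x y u xuy; rewrite (theta1 _ _ _ xuy) (theta2 _ _ _ xuy) scalerA -scalerDl.
Qed.

Section DerivationWeights.
Variable D : A -> A.
Hypothesis D_linear : linear D.
Hypothesis D_mul : forall a b, D (a * b) = D a * b + a * D b.
Hypothesis D_e : forall i, D (e i) = 0.
#[local] HB.instance Definition _ := GRing.isLinear.Build k A A *:%R D D_linear.

Definition arrow_weight (a : Ar) : k := coord [tuple nuA a] 0 (D (nuA a)).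

(* D maps e_y A e_x into itself, and e_y A e_x is the line spanned by nuA a. *)
Lemma der_nuA a : D (nuA a) = arrow_weight a *: nuA a.
Proof.
set V := (<[e (tgt a)]> * fullv * <[e (src a)]>)%VS.
have corner (t : A) : e (tgt a) * t * e (src a) \in V.
  by do 2?apply: memv_mul; rewrite ?memv_line ?memvf.
have lineV : <[nuA a]>%VS = V.
  by apply/eqP; rewrite eqEdim dim_vline nuA_neq0 A_constricted -memvE -nuA_corner corner.
have DnuA : D (nuA a) = e (tgt a) * D (nuA a) * e (src a).
  by rewrite -{1}nuA_corner !D_mul !D_e mulr0 addr0 mul0r add0r.
have : D (nuA a) \in <<[tuple nuA a]>>%VS by rewrite /= span_seq1 lineV DnuA corner.
by move/coord_span ->; rewrite big_ord1.
Qed.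

Definition walk_weight (w : seq (Ar * bool)) : k :=
  \sum_(st <- w) (if st.2 then arrow_weight st.1 else - arrow_weight st.1).

Lemma walk_weight_cat w1 w2 : walk_weight (w1 ++ w2) = walk_weight w1 + walk_weight w2.
Proof. exact: big_cat. Qed.

Lemma walk_weight_winv w : walk_weight (winv w) = - walk_weight w.
Proof.
rewrite /walk_weight /winv big_rev big_map -sumrN.
by apply: eq_bigr => -[a []] _ /=; rewrite ?opprK.
Qed.

Lemma der_1 : D 1 = 0.
Proof.
have := D_mul 1 1; rewrite !mulr1 mul1r => /(congr1 (fun t => t - D 1)).
by rewrite subrr addrK => <-.
Qed.

Lemma der_nu_word u : D (nu_word u) = walk_weight (fw u) *: nu_word u.
Proof.
elim: u => [|a u IHu]; first by rewrite der_1 /walk_weight big_nil scale0r.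
rewrite nu_word_cons D_mul IHu der_nuA -scalerAl -scalerAr -scalerDl.
by rewrite /walk_weight big_cons addrC.
Qed.

Lemma der_nu_path z u : D (nu z u) = walk_weight (fw u) *: nu z u.
Proof. by rewrite nu_pathE D_mul D_e mulr0 addr0 der_nu_word scalerAl. Qed.

Lemma der_nu_term (r : k * ('I_n * seq Ar)) :
  D (r.1 *: nu r.2.1 r.2.2) = walk_weight (fw r.2.2) *: (r.1 *: nu r.2.1 r.2.2).
Proof. by rewrite linearZ /= der_nu_path !scalerA mulrC. Qed.

Lemma walk_weight_minrel lc p q : minimal_relation src tgt e nuA lc ->
  p \in lc -> q \in lc -> walk_weight (fw p.2.2) = walk_weight (fw q.2.2).
Proof.
move=> minL plc qlc; pose lw (r : k * ('I_n * seq Ar)) := walk_weight (fw r.2.2).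
have lc0 : nu_lc lc = 0 by case: minL.
have : all (fun r => lw r == lw p) lc.
  apply: minimal_relation_filter minL plc _ _ => //; rewrite /nu_lc big_filter.
  exact: (eigen_sum_component (f := D) _ der_nu_term).
by move/allP/(_ q qlc)/eqP.
Qed.

Lemma walk_weight_simI w w' : simI src tgt e nuA w w' -> walk_weight w.2 = walk_weight w'.2.
Proof.
elim=> {w w'} [w w' [p [g [g' [q [_ -> -> _ gen]]]]] | // | w w' _ -> // | w1 w2 w3 _ -> _ -> //].
rewrite !walk_weight_cat; congr (_ + (_ + _)).
case: gen => [[a [-> ->]] | [[a [-> ->]] | [lc [u [v [minL zu zv -> ->]]]]]].
- by rewrite /walk_weight !big_cons big_nil /= addr0 addNr.
- by rewrite /walk_weight !big_cons big_nil /= addr0 addrN.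
case/mapP: zu => p' p'lc /(congr1 snd) /= ->.
case/mapP: zv => q' q'lc /(congr1 snd) /= ->.
exact: walk_weight_minrel minL p'lc q'lc.
Qed.

Lemma walk_weight_hom x0 : hom_pi1 src tgt e nuA x0 walk_weight.
Proof. by split=> [w w' _ _ /walk_weight_simI | w1 w2 _ _]; last exact: walk_weight_cat. Qed.

Lemma theta_rep_walk_weight x0 gam : (forall x, is_walk src tgt x0 x (gam x)) ->
  let E := ecomb (walk_weight \o gam) in
  theta_rep src tgt e nuA gam walk_weight (fun a => -1 *: (E * a - a * E) + D a).
Proof.
move=> gam_walk E; split; first by apply: der0_lincomb; [exact: der0_inner | split].
move=> x y u /andP[Vu /eqP uy]; rewrite inner_nu_path // der_nu_path uy.
rewrite scaleN1r -scaleNr -scalerDl !walk_weight_cat walk_weight_winv /=.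
by rewrite opprB addrAC -addrA.
Qed.

End DerivationWeights.

Lemma der0_commute D1 D2 a : der0 e D1 -> der0 e D2 -> D1 (D2 a) = D2 (D1 a).
Proof.
case=> lin1 mul1 e1 [lin2 mul2 e2]; have [L [_ ->]] := nu_surj a.
exact: (eigen_sum_commute lin1 lin2 L (der_nu_term lin1 mul1 e1) (der_nu_term lin2 mul2 e2)).
Qed.

Section WeightDerivation.
Variable lam : 'I_n * seq Ar -> k.
Hypothesis lam_minrel : forall lc p q, minimal_relation src tgt e nuA lc ->
  p \in lc -> q \in lc -> lam p.2 = lam q.2.
Hypothesis lam_nil : forall z, lam (z, [::]) = 0.
Hypothesis lam_cat : forall z u v, wvalid z (fw (u ++ v)) ->
  lam (z, u ++ v) = lam (z, u) + lam (wend z (fw u), v).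

Lemma nu_lc_repr a : exists L, valid_lc L && (a == nu_lc L).
Proof. by have [L [/andP[VL _] ->]] := nu_surj a; exists L; rewrite eqxx andbT. Qed.

Definition weight_der (a : A) : A := nu_wlc lam (xchoose (nu_lc_repr a)).

Lemma weight_derE a L : valid_lc L -> a = nu_lc L -> weight_der a = nu_wlc lam L.
Proof.
have /andP[V' /eqP E'] := xchooseP (nu_lc_repr a).
by move=> VL E; apply: (nu_wlc_eq lam_minrel) => //; rewrite -E' -E.
Qed.

Lemma weight_der_linear : linear weight_der.
Proof.
move=> c a b; set La := xchoose (nu_lc_repr a); set Lb := xchoose (nu_lc_repr b).
have /andP[Va /eqP Ea] := xchooseP (nu_lc_repr a).
have /andP[Vb /eqP Eb] := xchooseP (nu_lc_repr b).
rewrite (@weight_derE _ (scale_lc c La ++ Lb)).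
- by rewrite nu_wlc_cat nu_wlc_scale.
- by rewrite valid_lc_cat valid_lc_scale Va.
by rewrite nu_lc_wlc nu_wlc_cat nu_wlc_scale -!nu_lc_wlc -Ea -Eb.
Qed.

#[local] HB.instance Definition _ := GRing.isLinear.Build k A A *:%R weight_der weight_der_linear.

Lemma weight_der_nu_path z u : wvalid z (fw u) -> weight_der (nu z u) = lam (z, u) *: nu z u.
Proof.
move=> Vu; rewrite (@weight_derE _ [:: (1, (z, u))]) /valid_lc /= ?Vu //.
  by rewrite /nu_wlc big_seq1 mul1r.
by rewrite /nu_lc big_seq1 scale1r.
Qed.

Lemma weight_der_mul_nu_path z u z' v : wvalid z (fw u) -> wvalid z' (fw v) ->
  weight_der (nu z' v * nu z u) =
  weight_der (nu z' v) * nu z u + nu z' v * weight_der (nu z u).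
Proof.
move=> Vu Vv; rewrite !weight_der_nu_path // -scalerAl -scalerAr -scalerDl mul_nu_path //.
case: eqP => [uz'|_]; last by rewrite linear0 scaler0.
have Vuv : wvalid z (fw (u ++ v)) by rewrite fw_cat wvalid_cat Vu uz'.
by rewrite weight_der_nu_path // lam_cat // uz' addrC.
Qed.

Lemma weight_der_mul a b : weight_der (a * b) = weight_der a * b + a * weight_der b.
Proof.
have [La [/andP[Va _] ->]] := nu_surj a; have [Lb [/andP[Vb _] ->]] := nu_surj b.
have der_lc L : weight_der (nu_lc L) = \sum_(p <- L) p.1 *: weight_der (nu p.2.1 p.2.2).
  by rewrite linear_sum; apply: eq_bigr => p _; rewrite linearZ.
rewrite !der_lc /nu_lc !mul_lincomb linear_sum -big_split !big_seq; apply: eq_bigr => p pa.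
rewrite linear_sum -big_split !big_seq; apply: eq_bigr => q qb.
by rewrite linearZ /= -scalerDr weight_der_mul_nu_path //; [apply: (allP Vb) | apply: (allP Va)].
Qed.

Lemma weight_der_der0 : der0 e weight_der.
Proof.
split; [exact: weight_der_linear | exact: weight_der_mul | move=> i].
by rewrite -[e i]/(nu i [::]) weight_der_nu_path // lam_nil scale0r.
Qed.

End WeightDerivation.

Section Homomorphisms.
Variables (x0 : 'I_n) (gam : 'I_n -> seq (Ar * bool)).
Hypothesis gam_walk : forall x, is_walk src tgt x0 x (gam x).
Variable f : seq (Ar * bool) -> k.
Hypothesis f_hom : hom_pi1 src tgt e nuA x0 f.
Local Notation closed := (closed_walk src tgt x0).

Lemma wend_gam x : wend x0 (gam x) = x.
Proof. by case/andP: (gam_walk x) => _ /eqP. Qed.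

Lemma hom_cat w1 w2 : closed w1 -> closed w2 -> f (w1 ++ w2) = f w1 + f w2.
Proof. by case: f_hom => _; apply. Qed.

Lemma hom_nil : f [::] = 0.
Proof.
have nil_closed : closed [::] by rewrite /closed_walk /is_walk /= eqxx.
by apply: (@addrI _ (f [::])); rewrite addr0 -(hom_cat nil_closed nil_closed).
Qed.

Lemma hom_cancel (p w q : seq (Ar * bool)) : closed (p ++ w ++ winv w ++ q) ->
  f (p ++ w ++ winv w ++ q) = f (p ++ q).
Proof.
move=> C; case: f_hom => f_simI _; apply: (f_simI _ _ C (is_walk_cancel C)).
by apply: simI_cancel; case/andP: C.
Qed.

Lemma hom_winv w : closed w -> f (winv w) = - f w.
Proof.
move=> C; have Cinv := is_walk_winv C.
apply/eqP; rewrite -addr_eq0 addrC -hom_cat //; apply/eqP.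
have := @hom_cancel [::] w [::]; rewrite /= !cats0 hom_nil; apply.
exact: is_walk_cat C Cinv.
Qed.

Definition gam_loop x w := gam x ++ w ++ winv (gam (wend x w)).

Lemma gam_loop_closed x w : wvalid x w -> closed (gam_loop x w).
Proof.
move=> Vw; apply: is_walk_cat (gam_walk x) _.
exact: is_walk_cat (is_walk_wend Vw) (is_walk_winv (gam_walk _)).
Qed.

Lemma hom_gam_loop_nil x : f (gam_loop x [::]) = 0.
Proof.
have := @hom_cancel [::] (gam x) [::]; rewrite /= cats0 hom_nil; apply.
exact: (@gam_loop_closed x [::]).
Qed.

Lemma hom_gam_loop_cat x w1 w2 : wvalid x (w1 ++ w2) ->
  f (gam_loop x (w1 ++ w2)) = f (gam_loop x w1) + f (gam_loop (wend x w1) w2).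
Proof.
rewrite wvalid_cat => /andP[V1 V2]; set y := wend x w1.
have C := is_walk_cat (gam_loop_closed V1) (gam_loop_closed V2).
have E : gam_loop x w1 ++ gam_loop y w2 =
    (gam x ++ w1) ++ winv (gam y) ++ winv (winv (gam y)) ++ w2 ++ winv (gam (wend y w2)).
  by rewrite winvK /gam_loop -!catA.
rewrite E in C; rewrite -hom_cat ?gam_loop_closed // E hom_cancel //.
by rewrite /gam_loop wend_cat -!catA.
Qed.

Definition hom_weight (q : 'I_n * seq Ar) : k := f (gam_loop q.1 (fw q.2)).

Lemma hom_weight_minrel lc p q : minimal_relation src tgt e nuA lc ->
  p \in lc -> q \in lc -> hom_weight p.2 = hom_weight q.2.
Proof.
move=> minL plc qlc; have [srcE endE] := minimal_relation_endpoints minL plc qlc.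
have [/andP[Vlc _] _ _ _ _] := minL.
have Cp := gam_loop_closed (allP Vlc p plc); have Cq := gam_loop_closed (allP Vlc q qlc).
case: f_hom => f_simI _; apply: (f_simI _ _ Cp Cq).
rewrite /gam_loop endE srcE in Cq *.
apply: rst_step; exists (gam p.2.1), (fw p.2.2), (fw q.2.2), (winv (gam (wend p.2.1 (fw p.2.2)))).
split => //; first by case/andP: Cp => -> _; case/andP: Cq.
right; right; exists lc, p.2.2, q.2.2; split => //; rewrite wend_gam.
  by rewrite -surjective_pairing map_f.
by rewrite -srcE -surjective_pairing map_f.
Qed.

Lemma hom_weight_nil z : hom_weight (z, [::]) = 0.
Proof. exact: hom_gam_loop_nil. Qed.

Lemma hom_weight_cat z u v : wvalid z (fw (u ++ v)) ->
  hom_weight (z, u ++ v) = hom_weight (z, u) + hom_weight (wend z (fw u), v).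
Proof. by move=> Vuv; rewrite /hom_weight /= fw_cat hom_gam_loop_cat // -fw_cat. Qed.

Lemma theta_rep_hom : theta_rep src tgt e nuA gam f (weight_der hom_weight).
Proof.
split; first exact: weight_der_der0 hom_weight_minrel hom_weight_nil hom_weight_cat.
by move=> x y u /andP[Vu /eqP <-]; rewrite (weight_der_nu_path hom_weight_minrel).
Qed.

Section Injectivity.
Hypothesis gam_root : gam x0 = [::].
Variables (D : A -> A) (c : 'I_n -> k).
Hypothesis D_theta : theta_rep src tgt e nuA gam f D.
Hypothesis D_inner : forall a, D a = ecomb c * a - a * ecomb c.

Lemma hom_gam_loop_arrow a : f (gam_loop (src a) [:: (a, true)]) = c (tgt a) - c (src a).
Proof.
have a_path : is_path src tgt (src a) (tgt a) [:: a] by rewrite /is_path /is_walk /= !eqxx.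
have [_ theta] := D_theta; move: (theta _ _ _ a_path).
rewrite D_inner inner_nu_path /= ?eqxx // nu_path_arrow => /eqP.
by rewrite -subr_eq0 -scalerBl scaler_eq0 (negPf (nuA_neq0 a)) orbF subr_eq0 => /eqP ->.
Qed.

Lemma hom_gam_loop_inner x w : wvalid x w -> f (gam_loop x w) = c (wend x w) - c x.
Proof.
elim: w x => [|st w IHw] x; first by rewrite hom_gam_loop_nil subrr.
rewrite -cat1s => V; rewrite hom_gam_loop_cat // IHw; last first.
  by move: V; rewrite wvalid_cat => /andP[].
suff -> : f (gam_loop x [:: st]) = c (wend x [:: st]) - c x by rewrite wend_cat addrC addrA subrK.
move: V => /andP[/eqP <- _]; case: st => a [].
  exact: hom_gam_loop_arrow.
have -> : gam_loop (tgt a) [:: (a, false)] = winv (gam_loop (src a) [:: (a, true)]).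
  by rewrite /gam_loop !winv_cat winvK -catA.
by rewrite hom_winv ?gam_loop_closed /= ?eqxx // hom_gam_loop_arrow opprB.
Qed.

Lemma hom_inner_closed w : closed w -> f w = 0.
Proof.
case/andP=> Vw /eqP wx0; have := hom_gam_loop_inner Vw.
rewrite wx0 subrr /gam_loop wx0 gam_root => <-; congr f; exact: (esym (cats0 w)).
Qed.

End Injectivity.

End Homomorphisms.

End Presentation.

Theorem proposition2p7
  (k : closedFieldType) (A : falgType k) (n : nat) (Ar : finType)
  (src tgt : Ar -> 'I_n) (e : 'I_n -> A) (nuA : Ar -> A)
  (x0 : 'I_n) (T : {set Ar}) (gam : 'I_n -> seq (Ar * bool)) :
  complete_prim_orth_idem e ->
  basic_wrt e ->
  connected_alg A ->
  acyclic src tgt ->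
  constricted src tgt e ->
  presentation src tgt e nuA ->
  maximal_tree src tgt x0 T ->
  tree_walks src tgt x0 T gam ->
  [/\
   (* theta_nu is well defined: theta_nu(f) has a representative derivation *)
   forall f, hom_pi1 src tgt e nuA x0 f ->
     exists D, theta_rep src tgt e nuA gam f D,
   (* theta_nu is k-linear *)
   forall (c : k) f g D D',
     theta_rep src tgt e nuA gam f D -> theta_rep src tgt e nuA gam g D' ->
     theta_rep src tgt e nuA gam (fun w => c * f w + g w)
                                 (fun a => c *: D a + D' a),
   (* theta_nu is injective *)
   forall f D, hom_pi1 src tgt e nuA x0 f -> theta_rep src tgt e nuA gam f D ->
     int0 e D -> forall w, closed_walk src tgt x0 w -> f w = 0,
   (* theta_nu is surjective *)
   forall D, der0 e D -> exists f D',
     [/\ hom_pi1 src tgt e nuA x0 f, theta_rep src tgt e nuA gam f D' &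
         int0 e (fun a => D a - D' a)] &
   (* HH^1(A) is an abelian Lie algebra *)
   forall D1 D2, der0 e D1 -> der0 e D2 -> int0 e (fun a => D1 (D2 a) - D2 (D1 a))].
Proof.
move=> [e_prim e_orth _] _ _ _ A_constricted [nuA_corner nu_surj _ I_square] _ gam_tree.
have e_idem i : e i * e i = e i by case: (e_prim i).
have gam_walk x : is_walk src tgt x0 x (gam x) by case: (gam_tree x).
have nuA_neq0 := admissible_nuA_neq0 e_idem nuA_corner I_square.
split.
- move=> f f_hom; eexists.
  exact: (theta_rep_hom e_idem e_orth nuA_corner nu_surj gam_walk f_hom).
- exact: theta_rep_lincomb.
- move=> f D f_hom D_theta [c D_inner].
  exact: (hom_inner_closed e_idem e_orth nuA_corner nuA_neq0 gam_walk f_hom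
            (tree_walks_root gam_tree) D_theta D_inner).
- move=> D [D_linear D_mul D_e]; eexists; eexists; split.
  + exact: (walk_weight_hom nuA_corner nuA_neq0 A_constricted D_linear D_mul D_e).
  + exact: (theta_rep_walk_weight e_idem e_orth nuA_corner nuA_neq0 A_constricted
              D_linear D_mul D_e gam_walk).
  exists (walk_weight nuA D \o gam) => a /=.
  by rewrite scaleN1r opprD opprK addrC subrK.
move=> D1 D2 D1_der D2_der; exists (fun _ => 0) => a.
rewrite (der0_commute nuA_corner nuA_neq0 A_constricted nu_surj a D1_der D2_der) subrr.
by rewrite /ecomb big1 ?mul0r ?mulr0 ?subrr // => i _; rewrite scale0r.
Qed.
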